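(* Let $\mathcal A=\mathcal R$ be a finite set of $n_a$ units with random treatment vector $\mathbf T$, edge potential outcomes $E_{ar}$, realized edges $e_{ar}$, weights $w_{ar},u_{ar},c_{ar}$ and outcome model $y_a=\alpha_a+\beta_ax_a+\gamma_aT_a$ as in the context. Suppose $G$ is a known anchor subgraph and: (a) edges are $r$-driven; (b) the $T_r$ are independent Bernoulli$(p)$ with $p\in(0,1)$; (c) $\{(a,r)\mid u_{ar}\neq0\}\subset G$; (d) $c_{ar}=\mathbb I((a,r)\in G)$; (e) $w_{ar}\neq0$ for all $(a,r)\in G$; (f) $|\{r\mid u_{ar}\neq0\}|>0$ for all $a$. If moreover $w_{aa}=u_{aa}=0$ for all $a$, then $$\hat\mu^{u,c}_{uni}=\frac1{n_a}\sum_a\left[\hat\beta^u_a\cdot\widehat{\mathcal W_a(\mathbf 1)}^c+\hat\gamma_a\right]$$ is an unbiased estimator of the TTE $\frac1{n_a}\sum_a[\mathcal W_a(\mathbf 1)\beta_a+\gamma_a]$.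
   Context: Setting (endogenous unipartite interference graph): the analysis units and randomization units coincide, $\mathcal A=\mathcal R$, $n_a$ units. A random treatment vector $\mathbf T=(T_r)_{r\in\mathcal R}$ is assigned; all randomness comes from $\mathbf T$. For each ordered pair $(a,r)$ there is an unknown edge potential outcome function $E_{ar}:\{0,1\}^{n_a}\to\{0,1\}$ (possibly $E_{ar}\neq E_{ra}$) with observed realization $e_{ar}=E_{ar}(\mathbf T)$. Edges are $r$-driven if each $E_{ar}(\mathbf T)$ depends on $\mathbf T$ only through $T_r$. An anchor subgraph is a set $G\subset\mathcal A\times\mathcal R$ with $E_{ar}(\mathbf T)=1$ for all $\mathbf T$ and all $(a,r)\in G$. Outcome model: with known real weights $w_{ar}$, $y_a=Y_a(\mathbf T)=\alpha_a+\beta_ax_a+\gamma_aT_a$, where $x_a=\sum_rT_rE_{ar}(\mathbf T)w_{ar}$ and $\alpha_a,\beta_a,\gamma_a$ are unknown constants. TTE: $\frac1{n_a}\sum_a[Y_a(\mathbf 1)-Y_a(\mathbf 0)]=\frac1{n_a}\sum_a[\mathcal W_a(\mathbf 1)\beta_a+\gamma_a]$ with $\mathcal W_a(\mathbf 1)=\sum_rw_{ar}E_{ar}(\mathbf 1)$. Estimators: for fixed real weights $u_{ar},c_{ar}$, $z^u_a=\sum_rT_ru_{ar}$, $\hat\beta^u_a=y_a(z^u_a-\mathbb Ez^u_a)/\mathrm{Cov}(x_a,z^u_a)$, $\widehat{\mathcal W_a(\mathbf 1)}^c=\sum_r\left[\frac{T_rw_{ar}(e_{ar}-c_{ar})}{p}+w_{ar}c_{ar}\right]$,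 and $\hat\gamma_a=T_ay_a/p-(1-T_a)y_a/(1-p)$. *)

From mathcomp Require Import all_boot all_order all_algebra.
Set Implicit Arguments. Unset Strict Implicit. Unset Printing Implicit Defensive.
Import Order.TTheory GRing.Theory Num.Theory.
Local Open Scope ring_scope.

Section Defs.
Variables (R : realFieldType) (n : nat).

Definition trt := {ffun 'I_n -> bool}.

Definition b2R (b : bool) : R := (b : nat)%:R.

Definition bern_prob (p : R) (T : trt) : R :=
  \prod_(r < n) (if T r then p else 1 - p).

Definition Exp (p : R) (f : trt -> R) : R :=
  \sum_(T : trt) bern_prob p T * f T.

Definition Cov (p : R) (f g : trt -> R) : R :=
  Exp p (fun T => f T * g T) - Exp p f * Exp p g.

Definition all_ones : trt := [ffun => true].

Variable E : 'I_n -> 'I_n -> trt -> bool.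

Definition r_driven : Prop :=
  forall (a r : 'I_n) (T T' : trt), T r = T' r -> E a r T = E a r T'.

Definition anchor_subgraph (G : {set 'I_n * 'I_n}) : Prop :=
  forall (a r : 'I_n) (T : trt), (a, r) \in G -> E a r T = true.

Variables (w : 'I_n -> 'I_n -> R) (alpha beta gamma : 'I_n -> R).

Definition xexp (a : 'I_n) (T : trt) : R :=
  \sum_(r < n) b2R (T r) * b2R (E a r T) * w a r.

Definition Yout (a : 'I_n) (T : trt) : R :=
  alpha a + beta a * xexp a T + gamma a * b2R (T a).

Definition W1 (a : 'I_n) : R := \sum_(r < n) w a r * b2R (E a r all_ones).

Definition TTE : R := n%:R^-1 * \sum_(a < n) (W1 a * beta a + gamma a).

Variables (p : R) (u c : 'I_n -> 'I_n -> R).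

Definition zu (a : 'I_n) (T : trt) : R := \sum_(r < n) b2R (T r) * u a r.

Definition beta_hat (a : 'I_n) (T : trt) : R :=
  Yout a T * (zu a T - Exp p (zu a)) / Cov p (xexp a) (zu a).

Definition W1_hat (a : 'I_n) (T : trt) : R :=
  \sum_(r < n) (b2R (T r) * w a r * (b2R (E a r T) - c a r) / p + w a r * c a r).

Definition gamma_hat (a : 'I_n) (T : trt) : R :=
  b2R (T a) * Yout a T / p - (1 - b2R (T a)) * Yout a T / (1 - p).

Definition mu_hat_uni (T : trt) : R :=
  n%:R^-1 * \sum_(a < n) (beta_hat a T * W1_hat a T + gamma_hat a T).

End Defs.

From mathcomp Require Import all_boot all_order all_algebra.
From mathcomp Require Import ring.
Set Implicit Arguments. Unset Strict Implicit. Unset Printing Implicit Defensive.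
Import Order.TTheory GRing.Theory Num.Theory.
Local Open Scope ring_scope.

(* Fix a unit a and let S be the set of its anchored neighbours r, (a, r) \in G.
   As edges are r-driven, x_a = XS + XN is a linear form in the treatments on S
   plus one in the treatments off S.  By (c) z^u_a only sees the treatments on S,
   while by (d) the anchored edges drop out of W1_hat, which therefore only sees
   the treatments off S; a is not in S because w_aa = 0.  Writing
   Y_a = beta_a XS + (a function of the treatments off S) and using independence,
   E[Y_a (z - E z) W1_hat] = beta_a Cov(XS, z) E[W1_hat] = beta_a Cov(x_a, z) W1,
   the other part being killed by the centred factor z - E z.  Finally gamma_hat
   is a Horvitz-Thompson contrast on T_a, and x_a does not involve T_a since
   w_aa = 0. *)

Section BernoulliExpectation.
Variables (R : realFieldType) (n : nat) (p : R).

Lemma eq_Exp (f g : trt n -> R) : f =1 g -> Exp p f = Exp p g.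
Proof. by move=> eq_fg; apply: eq_bigr => T _; rewrite eq_fg. Qed.

Lemma ExpD (f g : trt n -> R) : Exp p (fun T => f T + g T) = Exp p f + Exp p g.
Proof. by rewrite /Exp -big_split; apply: eq_bigr => T _; rewrite mulrDr. Qed.

Lemma ExpMl (k : R) (f : trt n -> R) : Exp p (fun T => k * f T) = k * Exp p f.
Proof. by rewrite /Exp mulr_sumr; apply: eq_bigr => T _; rewrite mulrCA. Qed.

Lemma Exp_sum (I : finType) (P : pred I) (F : I -> trt n -> R) :
  Exp p (fun T => \sum_(i | P i) F i T) = \sum_(i | P i) Exp p (F i).
Proof. by rewrite /Exp; under eq_bigr do rewrite mulr_sumr; exact: exchange_big. Qed.

Lemma Exp_prod_coord (h : 'I_n -> bool -> R) :
  Exp p (fun T => \prod_i h i (T i)) = \prod_i (p * h i true + (1 - p) * h i false).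
Proof.
rewrite /Exp /bern_prob.
under [RHS]eq_bigr do rewrite -(big_bool _ (fun b => (if b then p else 1 - p) * h _ b)).
by rewrite bigA_distr_bigA; apply: eq_bigr => T _; rewrite big_split.
Qed.

Lemma sum_bern_prob : \sum_(T : trt n) bern_prob p T = 1.
Proof.
have := Exp_prod_coord (fun _ _ => 1).
rewrite [X in _ = X]big1 => [<-|i _]; last by rewrite !mulr1 addrC subrK.
by apply: eq_bigr => T _; rewrite big1_eq mulr1.
Qed.

Lemma Exp_cst (k : R) : Exp p (fun _ : trt n => k) = k.
Proof. by rewrite /Exp -mulr_suml sum_bern_prob mul1r. Qed.

Lemma Exp_coord (r : 'I_n) : Exp p (fun T => b2R R (T r)) = p.
Proof.
transitivity (Exp p (fun T => \prod_i (if i == r then b2R R (T i) else 1))).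
  by apply: eq_Exp => T; rewrite (bigD1 r) //= eqxx big1 ?mulr1 // => i /negPf ->.
rewrite (Exp_prod_coord (fun i b => if i == r then b2R R b else 1)).
rewrite (bigD1 r) //= eqxx big1 => [|i /negPf ->].
  by rewrite /b2R /= mulr1 mulr0 addr0 mulr1.
by rewrite !mulr1 addrC subrK.
Qed.

Lemma Exp_sum_coord (A : {set 'I_n}) (k : 'I_n -> R) :
  Exp p (fun T => \sum_(r in A) b2R R (T r) * k r) = p * \sum_(r in A) k r.
Proof.
rewrite Exp_sum mulr_sumr; apply: eq_bigr => r _.
rewrite (eq_Exp (g := fun T => k r * b2R R (T r))) => [|T]; last exact: mulrC.
by rewrite ExpMl Exp_coord mulrC.
Qed.

Definition depends_on (A : {set 'I_n}) (f : trt n -> R) :=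
  forall T T' : trt n, {in A, T =1 T'} -> f T = f T'.

Lemma depends_on_sum_coord (A : {set 'I_n}) (k : 'I_n -> R) :
  depends_on A (fun T => \sum_(r in A) b2R R (T r) * k r).
Proof. by move=> T T' eqT; apply: eq_bigr => r rA; rewrite eqT. Qed.

Lemma depends_onD (A : {set 'I_n}) (f g : trt n -> R) :
  depends_on A f -> depends_on A g -> depends_on A (fun T => f T + g T).
Proof. by move=> df dg T T' eqT; rewrite (df T T') // (dg T T'). Qed.

Lemma depends_onM (A : {set 'I_n}) (f g : trt n -> R) :
  depends_on A f -> depends_on A g -> depends_on A (fun T => f T * g T).
Proof. by move=> df dg T T' eqT; rewrite (df T T') // (dg T T'). Qed.

Lemma depends_on_cst (A : {set 'I_n}) (k : R) : depends_on A (fun _ => k).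
Proof. by []. Qed.

Definition mix (A : {set 'I_n}) (X Y : trt n) : trt n :=
  [ffun i => if i \in A then X i else Y i].

Lemma bern_prob_mix (A : {set 'I_n}) (X Y : trt n) :
  bern_prob p (mix A X Y) * bern_prob p (mix A Y X) = bern_prob p X * bern_prob p Y.
Proof.
rewrite /bern_prob -!big_split; apply: eq_bigr => i _; rewrite !ffunE.
by case: (i \in A); last exact: mulrC.
Qed.

(* Swapping the coordinates outside A between two independent copies X, Y
   preserves the product measure and turns f X * g Y into f X * g X. *)
Lemma Exp_indep (A : {set 'I_n}) (f g : trt n -> R) :
  depends_on A f -> depends_on (~: A) g ->
  Exp p (fun T => f T * g T) = Exp p f * Exp p g.
Proof.
move=> df dg.
pose swap (XY : trt n * trt n) := (mix A XY.1 XY.2, mix A XY.2 XY.1).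
have swapK : involutive swap.
  by case=> X Y; congr pair; apply/ffunP => i; rewrite !ffunE; case: (i \in A).
have f_mix X Y : f (mix A X Y) = f X by apply: df => i iA; rewrite ffunE iA.
have g_mix X Y : g (mix A Y X) = g X.
  by apply: dg => i; rewrite in_setC ffunE => /negPf ->.
rewrite /Exp mulr_suml; under [RHS]eq_bigr do rewrite mulr_sumr.
rewrite pair_bigA (reindex_inj (inv_inj swapK)) /=.
under [RHS]eq_bigr => XY _.
  rewrite f_mix g_mix mulrACA bern_prob_mix mulrAC.
  over.
rewrite -(pair_bigA _ (fun X Y => bern_prob p X * (f X * g X) * bern_prob p Y)) /=.
apply: eq_bigr => X _; rewrite -mulr_sumr.
by rewrite sum_bern_prob mulr1.
Qed.

Lemma eq_Covl (f g h : trt n -> R) : f =1 g -> Cov p f h = Cov p g h.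
Proof.
move=> eq_fg; rewrite /Cov (eq_Exp eq_fg).
by rewrite (eq_Exp (g := fun T => g T * h T)) // => T; rewrite eq_fg.
Qed.

Lemma Cov_centered (f g : trt n -> R) :
  Cov p f g = Exp p (fun T => f T * (g T - Exp p g)).
Proof.
rewrite (eq_Exp (g := fun T => f T * g T + - Exp p g * f T)) => [|T]; last by ring.
by rewrite ExpD ExpMl /Cov mulNr mulrC.
Qed.

Lemma CovDl_indep (A : {set 'I_n}) (xs xn z : trt n -> R) :
  depends_on A z -> depends_on (~: A) xn ->
  Cov p (fun T => xs T + xn T) z = Cov p xs z.
Proof.
move=> dz dxn; rewrite /Cov.
rewrite (eq_Exp (f := fun T => (xs T + xn T) * z T)
                (g := fun T => xs T * z T + z T * xn T)) => [|T]; last by ring.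
by rewrite !ExpD (Exp_indep dz dxn); ring.
Qed.

Lemma Exp_centered_split (A : {set 'I_n}) (b : R) (xs h z W : trt n -> R) :
  depends_on A xs -> depends_on A z -> depends_on (~: A) h -> depends_on (~: A) W ->
  Exp p (fun T => (b * xs T + h T) * (z T - Exp p z) * W T) = b * Cov p xs z * Exp p W.
Proof.
move=> dxs dz dh dW.
have dzc : depends_on A (fun T => z T - Exp p z).
  exact: depends_onD dz (@depends_on_cst A (- Exp p z)).
rewrite (eq_Exp (g := fun T => b * (xs T * (z T - Exp p z) * W T)
                               + (z T - Exp p z) * (h T * W T))) => [|T]; last by ring.
rewrite ExpD ExpMl (Exp_indep (depends_onM dxs dzc) dW).
rewrite (Exp_indep dzc (depends_onM dh dW)).
by rewrite -Cov_centered ExpD Exp_cst subrr mul0r addr0 mulrA.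
Qed.

Lemma Exp_ht_contrast (a : 'I_n) (h : trt n -> R) (g : R) :
  p != 0 -> 1 - p != 0 -> depends_on (~: [set a]) h ->
  Exp p (fun T => b2R R (T a) * (h T + g * b2R R (T a)) / p
                  - (1 - b2R R (T a)) * (h T + g * b2R R (T a)) / (1 - p)) = g.
Proof.
move=> p0 q0 dh.
pose d T := (p^-1 + (1 - p)^-1) * b2R R (T a) - (1 - p)^-1.
have dd : depends_on [set a] d by move=> T T' eqT; rewrite /d eqT // set11.
rewrite (eq_Exp (g := fun T => d T * h T + g / p * b2R R (T a))) => [|T]; last first.
  by rewrite /d; case: (T a); rewrite /b2R /=; field; rewrite p0 q0.
rewrite ExpD (Exp_indep dd dh) ExpMl Exp_coord /d ExpD ExpMl Exp_coord Exp_cst.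
by field; rewrite p0 q0.
Qed.

End BernoulliExpectation.

Section AnchoredUnit.
Variables (R : realFieldType) (n : nat) (E : 'I_n -> 'I_n -> trt n -> bool)
  (w u c : 'I_n -> 'I_n -> R) (alpha beta gamma : 'I_n -> R) (p : R)
  (G : {set 'I_n * 'I_n}) (a : 'I_n).
Hypotheses (anchorG : anchor_subgraph E G) (r_drivenE : r_driven E)
  (u_anchored : forall r, u a r != 0 -> (a, r) \in G)
  (c_anchor : forall r, c a r = if (a, r) \in G then 1 else 0)
  (w_anchor : forall r, (a, r) \in G -> w a r != 0)
  (w_loop : w a a = 0).

Let S := [set r | (a, r) \in G].
Let k r := w a r * b2R R (E a r (all_ones n)).
Let XS (T : trt n) := \sum_(r in S) b2R R (T r) * k r.
Let XN (T : trt n) := \sum_(r in ~: S) b2R R (T r) * k r.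

Lemma loop_not_anchored : a \notin S.
Proof. by rewrite inE; apply/negP => /w_anchor; rewrite w_loop eqxx. Qed.

Lemma treated_edge (T : trt n) r :
  b2R R (T r) * b2R R (E a r T) = b2R R (T r) * b2R R (E a r (all_ones n)).
Proof.
by case Tr: (T r); rewrite ?mul0r // (@r_drivenE a r T (all_ones n)) // Tr ffunE.
Qed.

Lemma xexp_split T : xexp E w a T = XS T + XN T.
Proof.
rewrite /xexp (bigID (mem S)) /=.
congr (_ + _); apply: eq_big => [r|r _]; rewrite ?in_setC //;
  by rewrite treated_edge /k; ring.
Qed.

Lemma depends_on_xexp : depends_on (~: [set a]) (xexp E w a).
Proof.
move=> T T' eqT; apply: eq_bigr => r _; rewrite !treated_edge.
have [->|r_neq_a] := eqVneq r a; first by rewrite w_loop !mulr0.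
by rewrite eqT // in_setC1.
Qed.

Lemma zu_anchored T : zu u a T = \sum_(r in S) b2R R (T r) * u a r.
Proof.
rewrite /zu (bigID (mem S)) /= [X in _ + X]big1 ?addr0 // => r.
by rewrite inE => /(contraNT (@u_anchored r)) /eqP ->; rewrite mulr0.
Qed.

Lemma W1_hat_anchored T :
  W1_hat E w p c a T = \sum_(r in S) w a r + p^-1 * XN T.
Proof.
rewrite /W1_hat (bigID (mem S)) /= mulr_sumr; congr (_ + _).
  apply: eq_bigr => r; rewrite inE => arG.
  by rewrite c_anchor arG (anchorG T arG) /b2R /= subrr mulr0 mul0r add0r mulr1.
apply: eq_big => [r|r]; first by rewrite in_setC.
rewrite inE => /negPf arG; rewrite c_anchor arG subr0 mulr0 addr0.
by rewrite [_ * w a r * _]mulrAC treated_edge /k; ring.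
Qed.

Lemma depends_on_XS : depends_on S XS.
Proof. exact: depends_on_sum_coord. Qed.

Lemma depends_on_XN : depends_on (~: S) XN.
Proof. exact: depends_on_sum_coord. Qed.

Lemma depends_on_zu : depends_on S (zu u a).
Proof. by move=> T T' eqT; rewrite !zu_anchored; exact: depends_on_sum_coord. Qed.

Lemma depends_on_W1_hat : depends_on (~: S) (W1_hat E w p c a).
Proof. by move=> T T' eqT; rewrite !W1_hat_anchored (depends_on_XN eqT). Qed.

Lemma Exp_W1_hat : p != 0 -> Exp p (W1_hat E w p c a) = W1 E w a.
Proof.
move=> p0; rewrite (eq_Exp _ W1_hat_anchored) ExpD Exp_cst ExpMl Exp_sum_coord.
rewrite mulKf //.
rewrite /W1 [RHS](bigID (mem S)) /=; congr (_ + _).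
  apply: eq_bigr => r; rewrite inE => arG.
  by rewrite (anchorG (all_ones n) arG) mulr1.
by apply: eq_bigl => r; rewrite in_setC.
Qed.

Lemma Exp_beta_hat_W1_hat :
  p != 0 -> Cov p (xexp E w a) (zu u a) != 0 ->
  Exp p (fun T => beta_hat E w alpha beta gamma p u a T * W1_hat E w p c a T)
  = beta a * W1 E w a.
Proof.
move=> p0 cov_neq0.
pose rest T := alpha a + beta a * XN T + gamma a * b2R R (T a).
have depends_on_rest : depends_on (~: S) rest.
  move=> T T' eqT; rewrite /rest (depends_on_XN eqT) eqT //.
  by rewrite in_setC loop_not_anchored.
have cov_XS : Cov p (xexp E w a) (zu u a) = Cov p XS (zu u a).
  by rewrite (eq_Covl _ _ xexp_split) (CovDl_indep _ _ depends_on_zu depends_on_XN).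
transitivity (Exp p (fun T => (Cov p (xexp E w a) (zu u a))^-1 *
  ((beta a * XS T + rest T) * (zu u a T - Exp p (zu u a)) * W1_hat E w p c a T))).
  by apply: eq_Exp => T; rewrite /beta_hat /Yout xexp_split /rest; ring.
rewrite ExpMl (Exp_centered_split _ _ depends_on_XS depends_on_zu depends_on_rest
  depends_on_W1_hat) Exp_W1_hat // -cov_XS.
by field.
Qed.

Lemma Exp_gamma_hat :
  p != 0 -> 1 - p != 0 -> Exp p (gamma_hat E w alpha beta gamma p a) = gamma a.
Proof.
move=> p0 q0.
apply: (Exp_ht_contrast (h := fun T => alpha a + beta a * xexp E w a T)) => // T T' eqT.
by rewrite (depends_on_xexp eqT).
Qed.

End AnchoredUnit.

Theorem corollary1 (R : realFieldType) (n : nat)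
    (E : 'I_n -> 'I_n -> trt n -> bool)
    (w u c : 'I_n -> 'I_n -> R) (alpha beta gamma : 'I_n -> R)
    (p : R) (G : {set 'I_n * 'I_n}) :
  anchor_subgraph E G ->
  (* (a) edges are r-driven *)
  r_driven E ->
  (* (b) T_r independent Bernoulli(p), p in (0,1) *)
  0 < p < 1 ->
  (* (c) *)
  (forall a r : 'I_n, u a r != 0 -> (a, r) \in G) ->
  (* (d) *)
  (forall a r : 'I_n, c a r = if (a, r) \in G then 1 else 0 : R) ->
  (* (e) *)
  (forall a r : 'I_n, (a, r) \in G -> w a r != 0) ->
  (* (f) *)
  (forall a : 'I_n, (0 < #|[set r : 'I_n | u a r != 0%R]|)%N) ->
  (* well-definedness of beta_hat: nonzero covariance denominator *)
  (forall a : 'I_n, Cov p (xexp E w a) (zu u a) != 0) ->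
  (* no self-loops in the weights *)
  (forall a : 'I_n, w a a = 0 /\ u a a = 0) ->
  Exp p (mu_hat_uni E w alpha beta gamma p u c)
  = TTE E w beta gamma.
Proof.
move=> anchorG r_drivenE /andP[p_gt0 p_lt1] u_anchored c_anchor w_anchor _
  cov_neq0 loops.
have p_neq0 : p != 0 by rewrite gt_eqF.
have q_neq0 : 1 - p != 0 by rewrite gt_eqF // subr_gt0.
rewrite /mu_hat_uni /TTE ExpMl Exp_sum; congr (_ * _); apply: eq_bigr => a _.
have [w_loop _] := loops a.
rewrite ExpD (Exp_beta_hat_W1_hat alpha beta gamma anchorG r_drivenE (u_anchored a)
  (c_anchor a) (w_anchor a) w_loop p_neq0 (cov_neq0 a)).
by rewrite (Exp_gamma_hat alpha beta gamma r_drivenE w_loop p_neq0 q_neq0) mulrC.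
Qed.
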